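(* Let $\Lambda\subset\mathbb Z^n$ be a sublattice with a basis $S=\{v_1,\ldots,v_n\}$ which is non-acute. Let $k_1,\ldots,k_n$ be the unique integers with $W:=\sum_{i=1}^n v_i=\sum_{i=1}^n k_ie_i$, and let $R_o=\{i : k_i\equiv 1 \pmod 2\}$. If $$\sum_{i=1}^n k_i^2>4n-3|R_o|,$$ then $\Lambda$ is not cubiquitous.
   Context: $\mathbb Z^n$ carries the standard dot product $\langle\cdot,\cdot\rangle$ with standard basis $e_1,\ldots,e_n$. A set $S=\{v_1,\ldots,v_n\}\subset\mathbb Z^n$ is non-acute if $a_i:=\langle v_i,v_i\rangle\ge 1$ for all $i$, $\langle v_i,v_j\rangle\le 0$ for all $i\ne j$, and $a_i\ge -\sum_{j\ne i}\langle v_j,v_i\rangle$ for all $i$. A full-rank sublattice $\Lambda\subset\mathbb Z^n$ is cubiquitous if $\Lambda\cap(x+\{0,1\}^n)\ne\emptyset$ for every $x\in\mathbb Z^n$. *)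

From mathcomp Require Import all_boot all_order all_algebra.
Set Implicit Arguments. Unset Strict Implicit. Unset Printing Implicit Defensive.
Import Order.TTheory GRing.Theory Num.Theory.
Local Open Scope ring_scope.

Definition dot (n : nat) (u w : 'I_n -> int) : int := \sum_(j < n) u j * w j.

Definition lin_indep (n : nat) (v : 'I_n -> 'I_n -> int) : Prop :=
  forall c : 'I_n -> int,
    (forall j : 'I_n, \sum_(i < n) c i * v i j = 0) -> forall i, c i = 0.

Definition in_lattice (n : nat) (v : 'I_n -> 'I_n -> int) (y : 'I_n -> int) : Prop :=
  exists c : 'I_n -> int, forall j : 'I_n, y j = \sum_(i < n) c i * v i j.

Definition non_acute (n : nat) (v : 'I_n -> 'I_n -> int) : Prop :=
  (forall i, 1 <= dot (v i) (v i)) /\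
  (forall i j, i != j -> dot (v i) (v j) <= 0) /\
  (forall i, - \sum_(j < n | j != i) dot (v j) (v i) <= dot (v i) (v i)).

Definition cubiquitous (n : nat) (L : ('I_n -> int) -> Prop) : Prop :=
  forall x : 'I_n -> int, exists y : 'I_n -> int,
    L y /\ forall j : 'I_n, y j - x j = 0 \/ y j - x j = 1.

Definition Wcoord (n : nat) (v : 'I_n -> 'I_n -> int) (j : 'I_n) : int :=
  \sum_(i < n) v i j.

Definition R_odd (n : nat) (v : 'I_n -> 'I_n -> int) : {set 'I_n} :=
  [set j : 'I_n | (Wcoord v j %% 2)%Z == 1].

From mathcomp Require Import all_boot all_order all_algebra.
From mathcomp Require Import zify ring lra.
Set Implicit Arguments. Unset Strict Implicit. Unset Printing Implicit Defensive.
Import Order.TTheory GRing.Theory Num.Theory.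
Local Open Scope ring_scope.

(* Suppose the lattice is cubiquitous and pick a lattice point y in
   floor(W/2) + {0,1}^n.  Then 2y - W = sum_i s_i v_i with every s_i odd, so
   s_i^2 >= 1, and for the Gram matrix of a non-acute family this forces
   |2y - W|^2 >= |W|^2 (the Gram form only grows when the all-ones vector is
   replaced by such an s).  Coordinatewise, (2y - W)_j lies in {-1, 1} when
   k_j is odd and in {0, 2} when k_j is even, so |W|^2 <= |2y - W|^2 <=
   4n - 3|R_o|. *)

Section GramForm.

Variables (R : realDomainType) (n : nat) (G : 'I_n -> 'I_n -> R).
Hypothesis G_sym : forall i j, G i j = G j i.
Hypothesis G_offdiag_le0 : forall i j, i != j -> G i j <= 0.
Hypothesis G_rowsum_ge0 : forall i, 0 <= \sum_(j < n) G i j.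

Lemma gram_form_shift (s : 'I_n -> R) :
  2 * \sum_(i < n) \sum_(j < n) (s i * s j - 1) * G i j =
  2 * \sum_(i < n) (s i ^+ 2 - 1) * \sum_(j < n) G i j
  - \sum_(i < n) \sum_(j < n) G i j * (s i - s j) ^+ 2.
Proof.
pose A i j := (s i ^+ 2 - 1) * G i j.
have split_term i j : 2 * ((s i * s j - 1) * G i j) =
    A i j + A j i - G i j * (s i - s j) ^+ 2.
  by rewrite /A (G_sym j i); ring.
have sum_A : \sum_(i < n) \sum_(j < n) A i j =
    \sum_(i < n) (s i ^+ 2 - 1) * \sum_(j < n) G i j.
  by apply: eq_bigr => i _; rewrite mulr_sumr.
rewrite mulr_sumr; under eq_bigr => i _ do rewrite mulr_sumr.
under eq_bigr => i _ do under eq_bigr => j _ do rewrite split_term.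
under eq_bigr => i _ do rewrite sumrB big_split.
rewrite sumrB big_split /= [X in _ + X - _]exchange_big /= sum_A.
by rewrite mulr2n mulrDl mul1r.
Qed.

Lemma gram_form_ones_le (s : 'I_n -> R) : (forall i, 1 <= s i ^+ 2) ->
  \sum_(i < n) \sum_(j < n) G i j <= \sum_(i < n) \sum_(j < n) s i * s j * G i j.
Proof.
move=> s_ge1.
have gap : \sum_(i < n) \sum_(j < n) s i * s j * G i j - \sum_(i < n) \sum_(j < n) G i j
    = \sum_(i < n) \sum_(j < n) (s i * s j - 1) * G i j.
  rewrite -sumrB; apply: eq_bigr => i _.
  by rewrite -sumrB; apply: eq_bigr => j _; ring.
rewrite -subr_ge0 gap -(pmulr_rge0 _ (ltr0Sn _ 1)) gram_form_shift subr_ge0.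
apply: (@le_trans _ _ 0).
  rewrite sumr_le0 // => i _; rewrite sumr_le0 // => j _.
  have [<-|ne_ij] := eqVneq i j; first by rewrite subrr expr0n mulr0.
  by rewrite mulr_le0_ge0 ?sqr_ge0 ?G_offdiag_le0.
rewrite mulr_ge0 // sumr_ge0 // => i _.
by rewrite mulr_ge0 // subr_ge0 s_ge1.
Qed.

End GramForm.

Lemma dotC n (u w : 'I_n -> int) : dot u w = dot w u.
Proof. by apply: eq_bigr => j _; rewrite mulrC. Qed.

Lemma sum_sqr_comb n (v : 'I_n -> 'I_n -> int) (s : 'I_n -> int) :
  \sum_(j < n) (\sum_(i < n) s i * v i j) ^+ 2 =
  \sum_(i < n) \sum_(i' < n) s i * s i' * dot (v i) (v i').
Proof.
under eq_bigr => j _ do rewrite expr2 mulr_suml.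
under eq_bigr => j _ do under eq_bigr => i _ do rewrite mulr_sumr.
rewrite exchange_big; apply: eq_bigr => i _.
rewrite exchange_big; apply: eq_bigr => i' _.
by rewrite /dot mulr_sumr; apply: eq_bigr => j _; ring.
Qed.

Lemma non_acute_Wcoord_sqr_le n (v : 'I_n -> 'I_n -> int) (s : 'I_n -> int) :
  non_acute v -> (forall i, 1 <= s i ^+ 2) ->
  \sum_(j < n) Wcoord v j ^+ 2 <= \sum_(j < n) (\sum_(i < n) s i * v i j) ^+ 2.
Proof.
move=> [_ [offdiag_le0 col_dom]] s_ge1.
have rowsum_ge0 i : 0 <= \sum_(j < n) dot (v i) (v j).
  rewrite (bigD1 i) //=; under eq_bigr => j _ do rewrite dotC.
  have := col_dom i; lra.
have -> : \sum_(j < n) Wcoord v j ^+ 2 = \sum_(j < n) (\sum_(i < n) 1 * v i j) ^+ 2.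
  by apply: eq_bigr => j _; congr (_ ^+ 2); apply: eq_bigr => i _; rewrite mul1r.
rewrite !sum_sqr_comb.
under eq_bigr => i _ do under eq_bigr => i' _ do rewrite !mul1r.
by apply: gram_form_ones_le => // i j; apply: dotC.
Qed.

Lemma sqr_double_sub_le (k y : int) :
  y - (k %/ 2)%Z = 0 \/ y - (k %/ 2)%Z = 1 ->
  (2 * y - k) ^+ 2 <= (if (k %% 2)%Z == 1 then 1 else 4).
Proof.
have r_ge0 : (0 <= k %% 2)%Z by rewrite modz_ge0.
have r_lt2 : (k %% 2 < 2)%Z by rewrite ltz_pmod.
have -> : 2 * y - k = 2 * (y - (k %/ 2)%Z) - (k %% 2)%Z.
  by rewrite {1}(divz_eq k 2); ring.
have [->|->] : (k %% 2)%Z = 0 \/ (k %% 2)%Z = 1 by lia.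
all: by case=> ->.
Qed.

Lemma sum_weights_card n (A : {set 'I_n}) :
  \sum_(j < n) (if j \in A then 1 else 4 : int) = 4 * n%:Z - 3 * #|A|%:Z.
Proof.
have weight j : (if j \in A then 1 else 4 : int) = 4 - 3 * (if j \in A then 1 else 0).
  by case: (j \in A); lia.
rewrite (eq_bigr _ (fun j _ => weight j)) sumrB -mulr_sumr -big_mkcond /=.
by rewrite !sumr_const card_ord -[_ *+ n]mulr_natr !natz.
Qed.

Theorem proposition1p4 (n : nat) (v : 'I_n -> 'I_n -> int) :
  lin_indep v -> non_acute v ->
  \sum_(j < n) Wcoord v j ^+ 2 > 4 * (n%:Z) - 3 * (#|R_odd v|%:Z) ->
  ~ cubiquitous (in_lattice v).
Proof.
move=> _ non_acute_v W_large cubiq.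
have [y [[c y_comb] y_near]] := cubiq (fun j => (Wcoord v j %/ 2)%Z).
have odd_sqr_ge1 i : 1 <= (2 * c i - 1) ^+ 2 by rewrite expr2; nia.
have comb j : 2 * y j - Wcoord v j = \sum_(i < n) (2 * c i - 1) * v i j.
  by rewrite y_comb /Wcoord mulr_sumr -sumrB; apply: eq_bigr => i _; ring.
have upper : \sum_(j < n) (\sum_(i < n) (2 * c i - 1) * v i j) ^+ 2
    <= 4 * n%:Z - 3 * #|R_odd v|%:Z.
  rewrite -sum_weights_card; apply: ler_sum => j _.
  by rewrite -comb inE; apply: sqr_double_sub_le.
have lower := non_acute_Wcoord_sqr_le non_acute_v odd_sqr_ge1.
by move: W_large; rewrite ltNge (le_trans lower upper).
Qed.
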